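(* Let $R=\bigoplus_{s\in S}R_s$ be an $S$-graded ring inducing $S$ which is nearly epsilon-strongly graded. Then the following are equivalent: (i) $R$ is graded von Neumann regular; (ii) every principal right homogeneous ideal of $R$ is generated by a homogeneous idempotent element (and likewise for left ideals); (iii) every right ideal $I$ of $R$ generated by finitely many homogeneous elements $x_1,\dots,x_n$ such that $\deg(x_i)(\deg(x_i))^{-1}=e$ for all $i$, for some nonzero idempotent $e\in S$, is generated by a homogeneous idempotent element (and likewise for left ideals).
   Context: Rings are associative, not necessarily unital. $S$-graded ring inducing $S$: $S$ a partial groupoid, $R=\bigoplus_{s\in S}R_s$, $R_sR_t\subseteq R_{st}$ when $st$ defined, $R_sR_t\ne0$ implies $st$ defined. Convention: $0\in S$, $R_0=0$, $S\setminus\{0\}=\{s:R_s\ne0\}$, undefined products set to $0$, $0$ absorbing. $H_R=\bigcup_sR_s$; for nonzero $x\in H_R$, $\deg(x)$ is the unique $s$ with $x\in R_s$. A one-sided ideal $J$ is homogeneous if $J=\bigoplus_s(J\cap R_s)$. $S$ cancellative: $0\ne su=tu$ or $0\ne us=ut$ implies $s=t$. $I(S)$: idempotents of $S$. (LRI): for every $s\in S$ there exist $s^{-1}\in S$, $e,f\in I(S)$ with $es=sf=s$, $fs^{-1}=s^{-1}e=s^{-1}$, $ss^{-1}=e$, $s^{-1}s=f$. $R_sR_t$ denotes the additive subgroup generated by products. $R$ is nearly epsilon-strongly graded if $S$ is cancellative and satisfies (LRI), and for every $s$ and $x\in R_s$ there are $\epsilon(x)\in R_sR_{s^{-1}}$,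 $\epsilon'(x)\in R_{s^{-1}}R_s$ with $\epsilon(x)x=x=x\epsilon'(x)$. $R$ is graded von Neumann regular if $x\in xRx$ for all $x\in H_R$. *)

From mathcomp Require Import all_boot all_algebra.
Set Implicit Arguments. Unset Strict Implicit. Unset Printing Implicit Defensive.
Import GRing.Theory.
Local Open Scope ring_scope.

Definition nu_ring (R : zmodType) (mul : R -> R -> R) : Prop :=
  (forall x y w, mul x (mul y w) = mul (mul x y) w) /\
  (forall x y w, mul (x + y) w = mul x w + mul y w) /\
  (forall x y w, mul x (y + w) = mul x y + mul x w).

(* Partial groupoid with the convention: distinguished element z plays the
   role of 0 (undefined products are set to z), z absorbing. *)
Definition pgroupoid (S : eqType) (op : S -> S -> S) (z : S) : Prop :=
  forall s, op z s = z /\ op s z = z.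

(* R = (+)_{s in S} R_s, S-graded ring inducing S; G s is R_s. *)
Definition graded_inducing (S : eqType) (op : S -> S -> S) (z : S)
  (R : zmodType) (mul : R -> R -> R) (G : S -> R -> Prop) : Prop :=
  pgroupoid op z /\ nu_ring mul /\
  (forall s, G s 0 /\ forall x y, G s x -> G s y -> G s (x - y)) /\
  (forall x, G z x -> x = 0) /\
  (forall s, s <> z -> exists x, G s x /\ x <> 0) /\
  (forall s t x y, G s x -> G t y -> G (op s t) (mul x y)) /\
  (forall s t x y, G s x -> G t y -> mul x y <> 0 -> op s t <> z) /\
  (forall x, exists (sq : seq S) (f : S -> R),
      uniq sq /\ (forall s, s \in sq -> G s (f s)) /\ x = \sum_(s <- sq) f s) /\
  (forall (sq : seq S) (f : S -> R), uniq sq ->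
      (forall s, s \in sq -> G s (f s)) -> \sum_(s <- sq) f s = 0 ->
      forall s, s \in sq -> f s = 0).

Definition cancellative (S : eqType) (op : S -> S -> S) (z : S) : Prop :=
  (forall s t u, op s u <> z -> op s u = op t u -> s = t) /\
  (forall s t u, op u s <> z -> op u s = op u t -> s = t).

Definition idem (S : eqType) (op : S -> S -> S) (e : S) : Prop := op e e = e.

Definition lri_inv (S : eqType) (op : S -> S -> S) (s t : S) : Prop :=
  exists e f, idem op e /\ idem op f /\ op e s = s /\ op s f = s /\
    op f t = t /\ op t e = t /\ op s t = e /\ op t s = f.

Definition LRI (S : eqType) (op : S -> S -> S) : Prop :=
  forall s, exists t, lri_inv op s t.

(* y belongs to R_s R_t (additive subgroup generated by products) *)
Definition prodset (S : eqType) (R : zmodType) (mul : R -> R -> R)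
  (G : S -> R -> Prop) (s t : S) (y : R) : Prop :=
  exists n (a b : 'I_n -> R), (forall i, G s (a i) /\ G t (b i)) /\
    y = \sum_(i < n) mul (a i) (b i).

Definition nearly_eps_strong (S : eqType) (op : S -> S -> S) (z : S)
  (R : zmodType) (mul : R -> R -> R) (G : S -> R -> Prop) : Prop :=
  cancellative op z /\ LRI op /\
  forall s t, lri_inv op s t -> forall x, G s x ->
    exists ex ex', prodset mul G s t ex /\ prodset mul G t s ex' /\
      mul ex x = x /\ mul x ex' = x.

Definition homogeneous (S : eqType) (R : zmodType) (G : S -> R -> Prop) (x : R)
  : Prop := exists s, G s x.

Definition graded_vnr (S : eqType) (R : zmodType) (mul : R -> R -> R)
  (G : S -> R -> Prop) : Prop :=
  forall x, homogeneous G x -> exists r, x = mul (mul x r) x.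

Definition right_ideal (R : zmodType) (mul : R -> R -> R) (J : R -> Prop) : Prop :=
  J 0 /\ (forall x y, J x -> J y -> J (x - y)) /\ (forall x r, J x -> J (mul x r)).
Definition left_ideal (R : zmodType) (mul : R -> R -> R) (J : R -> Prop) : Prop :=
  J 0 /\ (forall x y, J x -> J y -> J (x - y)) /\ (forall x r, J x -> J (mul r x)).

Definition right_ideal_gen (R : zmodType) (mul : R -> R -> R) (X : R -> Prop)
  (y : R) : Prop :=
  forall J, right_ideal mul J -> (forall x, X x -> J x) -> J y.
Definition left_ideal_gen (R : zmodType) (mul : R -> R -> R) (X : R -> Prop)
  (y : R) : Prop :=
  forall J, left_ideal mul J -> (forall x, X x -> J x) -> J y.

Definition same_set (R : Type) (I J : R -> Prop) : Prop := forall y, I y <-> J y.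

Definition right_gen_hom_idem (S : eqType) (R : zmodType) (mul : R -> R -> R)
  (G : S -> R -> Prop) (X : R -> Prop) : Prop :=
  exists u, homogeneous G u /\ mul u u = u /\
    same_set (right_ideal_gen mul X) (right_ideal_gen mul (fun v => v = u)).
Definition left_gen_hom_idem (S : eqType) (R : zmodType) (mul : R -> R -> R)
  (G : S -> R -> Prop) (X : R -> Prop) : Prop :=
  exists u, homogeneous G u /\ mul u u = u /\
    same_set (left_ideal_gen mul X) (left_ideal_gen mul (fun v => v = u)).

From mathcomp Require Import all_boot all_algebra.
Import GRing.Theory.
Local Open Scope ring_scope.
Set Implicit Arguments. Unset Strict Implicit.

(* If u in R_e is an idempotent generating x_1 R + ... + x_k R
   and x has degree d with d d^-1 = e, then y = x - u x is homogeneous of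
   degree d; regularity y = y r y can be arranged with r in R_(d^-1), because
   comparing homogeneous components of y r y only the component r_t with
   d t d = d survives and cancellativity forces t = d^-1.  Then w = y r is an
   idempotent of degree e and u + (w - w u) is an idempotent of degree e
   generating u R + x R.  Conversely, if x R = u R with u idempotent, then
   u = x b and x = u x, so x = x b x; the nearly epsilon-strong hypothesis is
   what puts x in x R.  Left ideals are right ideals of the opposite ring,
   graded by the opposite groupoid. *)

Section NonUnitalRing.
Variables (R : zmodType) (mul : R -> R -> R).
Hypothesis ring_mul : nu_ring mul.

Lemma nu_mulA x y w : mul x (mul y w) = mul (mul x y) w.
Proof. by case: ring_mul. Qed.

Lemma nu_mulDl x y w : mul (x + y) w = mul x w + mul y w.
Proof. by case: ring_mul => _ []. Qed.

Lemma nu_mulDr x y w : mul x (y + w) = mul x y + mul x w.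
Proof. by case: ring_mul => _ []. Qed.

Lemma nu_mulBl x y w : mul (x - y) w = mul x w - mul y w.
Proof. by apply: (addIr (mul y w)); rewrite -nu_mulDl !subrK. Qed.

Lemma nu_mulBr x y w : mul w (x - y) = mul w x - mul w y.
Proof. by apply: (addIr (mul w y)); rewrite -nu_mulDr !subrK. Qed.

Lemma nu_mul0l w : mul 0 w = 0.
Proof. by have := nu_mulBl 0 0 w; rewrite subr0 subrr. Qed.

Lemma nu_mul0r w : mul w 0 = 0.
Proof. by have := nu_mulBr 0 0 w; rewrite subr0 subrr. Qed.

Lemma nu_mul_suml x (I : Type) (l : seq I) (P : pred I) (F : I -> R) :
  mul (\sum_(i <- l | P i) F i) x = \sum_(i <- l | P i) mul (F i) x.
Proof. exact: (big_morph (mul^~ x) (fun a b => nu_mulDl a b x) (nu_mul0l x)). Qed.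

Lemma nu_mul_sumr x (I : Type) (l : seq I) (P : pred I) (F : I -> R) :
  mul x (\sum_(i <- l | P i) F i) = \sum_(i <- l | P i) mul x (F i).
Proof. exact: (big_morph (mul x) (nu_mulDr x) (nu_mul0r x)). Qed.

Lemma right_idealD (J : R -> Prop) x y :
  right_ideal mul J -> J x -> J y -> J (x + y).
Proof.
by case=> J0 [JB _] Jx Jy; have := JB _ _ Jx (JB _ _ J0 Jy); rewrite sub0r opprK.
Qed.

Lemma right_ideal_mulr x : right_ideal mul (fun y => exists b, y = mul x b).
Proof.
split; first by exists 0; rewrite nu_mul0r.
split; first by move=> _ _ [b1 ->] [b2 ->]; exists (b1 - b2); rewrite nu_mulBr.
by move=> _ r [b ->]; exists (mul b r); rewrite nu_mulA.
Qed.

Lemma right_gen_hom_idemP (S : eqType) (G : S -> R -> Prop) (X : R -> Prop) v :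
  homogeneous G v -> mul v v = v ->
  (forall J, right_ideal mul J -> J v <-> forall x, X x -> J x) ->
  right_gen_hom_idem mul G X.
Proof.
move=> Gv vv hv; exists v; split=> //; split=> // y; split=> Jy J hJ JX.
  by apply: Jy => // x /(hv J hJ).1; apply; apply: JX.
by apply: Jy => // _ ->; apply/(hv J hJ).
Qed.

Lemma regular_of_right_gen_hom_idem (S : eqType) (G : S -> R -> Prop)
    (X : R -> Prop) x :
  (forall y, X y <-> y = x) -> (exists a, x = mul x a) ->
  right_gen_hom_idem mul G X -> exists r, x = mul (mul x r) x.
Proof.
move=> Xx [a xa] [u [_ [uu genu]]].
have [b ub] : exists b, u = mul x b.
  apply: (genu u).2 (right_ideal_mulr x) _; first by move=> J _; apply.
  by move=> y /Xx ->; exists a.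
have [c xc] : exists c, x = mul u c.
  apply: (genu x).1 (right_ideal_mulr u) _; first by move=> J _; apply; apply/Xx.
  by move=> _ ->; exists u.
by exists b; rewrite -ub xc nu_mulA uu.
Qed.

(* With y := x - u x (so u y = 0) and y = y r y, the element w := y r is an
   idempotent with y R = w R, and w - w u is an idempotent orthogonal to u. *)
Definition idem_join u x r := let w := mul (x - mul u x) r in u + (w - mul w u).

Lemma idem_joinP u x r : mul u u = u ->
  let y := x - mul u x in y = mul (mul y r) y ->
  let v := idem_join u x r in
  mul v v = v /\ forall J, right_ideal mul J -> J v <-> J u /\ J x.
Proof.
move=> uu y yry v; rewrite /v /idem_join /= -/y; set w := mul y r; set q := w - mul w u.
have uy : mul u y = 0 by rewrite nu_mulBr nu_mulA uu subrr.
have uw : mul u w = 0 by rewrite nu_mulA uy nu_mul0l.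
have wy : mul w y = y by rewrite -yry.
have ww : mul w w = w by rewrite {2}/w nu_mulA wy.
have uq : mul u q = 0 by rewrite nu_mulBr uw nu_mulA uw nu_mul0l subrr.
have qu : mul q u = 0 by rewrite nu_mulBl -nu_mulA uu subrr.
have qw : mul q w = w by rewrite nu_mulBl ww -nu_mulA uw nu_mul0r subr0.
have qq : mul q q = q by rewrite {2}/q nu_mulBr qw nu_mulA qw.
have qy : mul q y = y by rewrite nu_mulBl wy -nu_mulA uy nu_mul0r subr0.
split; first by rewrite nu_mulDl 2!nu_mulDr uu uq qu qq addr0 add0r.
move=> J hJ; have [_ [JB JM]] := hJ; split.
- move=> Jv.
  have Ju : J u by have := JM _ u Jv; rewrite nu_mulDl uu qu addr0.
  have Jq : J q by have := JM _ q Jv; rewrite nu_mulDl uq qq add0r.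
  have Jy : J y by have := JM _ y Jq; rewrite qy.
  split=> //; rewrite -[x](subrK (mul u x)).
  by apply: right_idealD => //; apply: JM.
- case=> Ju Jx.
  have Jy : J y by apply: JB => //; apply: JM.
  have Jw : J w by apply: JM.
  by apply: right_idealD => //; apply: JB => //; apply: JM.
Qed.

End NonUnitalRing.

Section Groupoid.
Variables (S : eqType) (op : S -> S -> S) (z : S).

Lemma quasi_inv_neq s t :
  pgroupoid op z -> op (op s t) s = s -> s <> z -> op s t <> z.
Proof. by move=> zabs sts sz stz; apply: sz; rewrite -sts stz (zabs s).1. Qed.

Lemma quasi_inv_unique s t t' :
  pgroupoid op z -> cancellative op z -> s <> z ->
  op (op s t) s = s -> op (op s t') s = s -> t' = t.
Proof.
move=> zabs [cR cL] sz sts st's.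
have st'_st : op s t' = op s t by apply: (cR _ _ s); rewrite ?st's // sts.
by apply: (cL _ _ s) => //; apply: quasi_inv_neq st's sz.
Qed.

Lemma lri_inv_quasi s t : lri_inv op s t -> op (op s t) s = s.
Proof. by case=> e [f [_ [_ [es [_ [_ [_ [-> _]]]]]]]]. Qed.

Lemma lri_inv_idem s t : lri_inv op s t -> idem op (op s t).
Proof. by case=> e [f [ee [_ [_ [_ [_ [_ [-> _]]]]]]]]. Qed.

Lemma lri_inv_op s t : lri_inv op s t -> lri_inv (fun a b => op b a) s t.
Proof. by case=> e [f [ee [ff [es [sf [ft [te [st ts]]]]]]]]; exists f, e. Qed.

Lemma LRI_op : LRI op -> LRI (fun a b => op b a).
Proof. by move=> lri s; have [t /lri_inv_op] := lri s; exists t. Qed.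

Lemma cancellative_op : cancellative op z -> cancellative (fun a b => op b a) z.
Proof. by case=> cR cL; split. Qed.

End Groupoid.

Definition right_principal_idem_generated (S : eqType) (R : zmodType)
    (mul : R -> R -> R) (G : S -> R -> Prop) : Prop :=
  forall x, homogeneous G x -> right_gen_hom_idem mul G (fun v => v = x).

Definition right_finite_idem_generated (S : eqType) (op : S -> S -> S) (z : S)
    (R : zmodType) (mul : R -> R -> R) (G : S -> R -> Prop) : Prop :=
  forall e, idem op e -> e <> z ->
  forall n (xs : 'I_n -> R) (d : 'I_n -> S),
    (forall i, xs i <> 0 /\ G (d i) (xs i) /\
               exists t, lri_inv op (d i) t /\ op (d i) t = e) ->
    right_gen_hom_idem mul G (fun v => exists i, v = xs i).

Section Graded.
Variables (S : eqType) (op : S -> S -> S) (z : S).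
Variables (R : zmodType) (mul : R -> R -> R) (G : S -> R -> Prop).
Hypothesis graded : graded_inducing op z mul G.

Let zabs : pgroupoid op z. Proof. by case: graded. Qed.
Let ring_mul : nu_ring mul. Proof. by case: graded => _ []. Qed.
Let G0 s : G s 0. Proof. by case: graded => _ [_ [/(_ s) []]]. Qed.
Let GB s x y : G s x -> G s y -> G s (x - y).
Proof. by case: graded => _ [_ [/(_ s) [_ GBs] _]]; apply: GBs. Qed.
Let GD s x y : G s x -> G s y -> G s (x + y).
Proof. by move=> Gx Gy; have := GB Gx (GB (G0 s) Gy); rewrite sub0r opprK. Qed.
Let Gz x : G z x -> x = 0. Proof. by case: graded => _ [_ [_ [Gz0 _]]]; apply: Gz0. Qed.
Let GM s t x y : G s x -> G t y -> G (op s t) (mul x y).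
Proof. by case: graded => _ [_ [_ [_ [_ [GM0 _]]]]]; apply: GM0. Qed.
Let Gdecomp x : exists (sq : seq S) (f : S -> R),
  uniq sq /\ (forall s, s \in sq -> G s (f s)) /\ x = \sum_(s <- sq) f s.
Proof. by case: graded => _ [_ [_ [_ [_ [_ [_ [dec _]]]]]]]. Qed.
Let Gdirect (sq : seq S) (f : S -> R) : uniq sq ->
  (forall s, s \in sq -> G s (f s)) -> \sum_(s <- sq) f s = 0 ->
  forall s, s \in sq -> f s = 0.
Proof. by case: graded => _ [_ [_ [_ [_ [_ [_ [_ dir]]]]]]]; apply: dir. Qed.

Lemma graded_nonzero_degree s x : G s x -> x <> 0 -> s <> z.
Proof. by move=> Gx x0 sz; apply: x0; apply: Gz; rewrite -sz. Qed.

Lemma graded_sum (I : eqType) s (l : seq I) (P : pred I) (F : I -> R) :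
  (forall i, i \in l -> P i -> G s (F i)) -> G s (\sum_(i <- l | P i) F i).
Proof.
move=> GF; rewrite big_seq_cond; apply: (big_ind (G s)) => [||i /andP[]].
- exact: G0.
- exact: GD.
- exact: GF.
Qed.

Lemma graded_component_sum (l : seq (S * R)) :
  (forall p, p \in l -> G p.1 p.2) -> \sum_(p <- l) p.2 = 0 ->
  forall s, \sum_(p <- l | p.1 == s) p.2 = 0.
Proof.
move=> Gl l0 s; set sq := undup (map fst l).
have [s_sq|s_nsq] := boolP (s \in sq); last first.
  rewrite big_hasC //; apply/hasPn => p pl; apply: contra s_nsq => /eqP <-.
  by rewrite mem_undup map_f.
apply: (Gdirect (f := fun t => \sum_(p <- l | p.1 == t) p.2)) s_sq.
- exact: undup_uniq.
- by move=> t _; apply: graded_sum => p pl /eqP <-; apply: Gl.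
rewrite -[RHS]l0; under eq_bigr do rewrite big_mkcond.
rewrite exchange_big /=; apply: eq_big_seq => p pl.
have p_sq : p.1 \in sq by rewrite mem_undup map_f.
rewrite (bigD1_seq p.1 p_sq (undup_uniq _)) /= eqxx big1 ?addr0 //.
by move=> t /negbTE; rewrite eq_sym => ->.
Qed.

Hypothesis cancS : cancellative op z.

Lemma graded_regular_witness s t x r : op (op s t) s = s -> G s x ->
  x = mul (mul x r) x -> exists2 r', G t r' & x = mul (mul x r') x.
Proof.
move=> sts Gx xrx; have [->|x0] := eqVneq x 0.
  by exists 0; [apply: G0 | rewrite !(nu_mul0r ring_mul)].
have sz : s <> z by apply: graded_nonzero_degree Gx _; apply/eqP.
have [sq [g [_ [Gg rE]]]] := Gdecomp r.
pose l := (s, - x) :: [seq (op (op s t') s, mul (mul x (g t')) x) | t' <- sq].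
have Gl p : p \in l -> G p.1 p.2.
  rewrite inE => /orP[/eqP -> | /mapP [t' t'sq ->]] /=.
    by rewrite -sub0r; apply: GB.
  by apply: GM => //; apply: GM => //; apply: Gg.
have l0 : \sum_(p <- l) p.2 = 0.
  rewrite big_cons big_map /= -(nu_mul_suml ring_mul) -(nu_mul_sumr ring_mul).
  by rewrite -rE -xrx addNr.
have := graded_component_sum Gl l0 s.
rewrite big_cons /= eqxx big_map /= addrC => /eqP; rewrite subr_eq0 => /eqP xE.
exists (\sum_(t' <- sq | op (op s t') s == s) g t').
  apply: graded_sum => t' t'sq /eqP st's.
  by rewrite -(quasi_inv_unique zabs cancS sz sts st's); apply: Gg.
by rewrite (nu_mul_sumr ring_mul) (nu_mul_suml ring_mul) xE.
Qed.

Lemma hom_idem_right_generator e (l : seq R) : graded_vnr mul G -> idem op e ->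
  (forall x, x \in l -> exists d t, [/\ G d x, op (op d t) d = d & op d t = e]) ->
  exists2 v, G e v /\ mul v v = v &
    forall J, right_ideal mul J -> J v <-> forall x, x \in l -> J x.
Proof.
move=> vnr ee; elim: l => [|x l IHl] hl.
  exists 0; first by split; [apply: G0 | apply: nu_mul0l].
  by move=> J [J0 _]; split=> // _ y; rewrite in_nil.
have [|u [Gu uu] genu] := IHl.
  by move=> y yl; apply: hl; rewrite inE yl orbT.
have [d [t [Gx dtd dte]]] := hl x (mem_head x l).
have ed : op e d = d by rewrite -dte.
set y := x - mul u x.
have Gy : G d y by apply: (GB Gx); have := GM Gu Gx; rewrite ed.
have [r0 yr0y] := vnr y (ex_intro _ d Gy).
have [r Gr yry] := graded_regular_witness dtd Gy yr0y.
have [vv genv] := idem_joinP ring_mul uu yry.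
exists (idem_join mul u x r).
  split=> //; rewrite /idem_join /= -/y; set w := mul y r.
  have Gw : G e w by rewrite -dte; apply: GM.
  have Gwu : G e (mul w u) by have := GM Gw Gu; rewrite ee.
  exact: GD Gu (GB Gw Gwu).
move=> J hJ; split=> [/(genv J hJ) [Ju Jx] x' | Jl].
  by rewrite inE => /orP[/eqP -> // | x'l]; apply: (genu J hJ).1.
apply/(genv J hJ); split; last by apply: Jl; rewrite mem_head.
by apply/(genu J hJ) => x' x'l; apply: Jl; rewrite inE x'l orbT.
Qed.

Lemma right_gen_hom_idem_seq e (X : R -> Prop) (l : seq R) :
  graded_vnr mul G -> idem op e -> (forall y, X y <-> y \in l) ->
  (forall x, x \in l -> exists d t, [/\ G d x, op (op d t) d = d & op d t = e]) ->
  right_gen_hom_idem mul G X.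
Proof.
move=> vnr ee Xl hl; have [v [Gv vv] genv] := hom_idem_right_generator vnr ee hl.
apply: (right_gen_hom_idemP (ex_intro _ e Gv) vv) => J hJ.
by apply: (iff_trans (genv J hJ)); split=> Jl x /Xl; apply: Jl.
Qed.

Hypothesis lriS : LRI op.

Lemma right_principal_of_vnr :
  graded_vnr mul G -> right_principal_idem_generated mul G.
Proof.
move=> vnr x [s Gx]; have [t st] := lriS s.
apply: (right_gen_hom_idem_seq (l := [:: x]) vnr (lri_inv_idem st)).
  by move=> y; rewrite inE; split=> [->|/eqP //]; apply: eqxx.
by move=> y; rewrite inE => /eqP ->; exists s, t; split=> //; apply: lri_inv_quasi.
Qed.

Lemma right_finite_of_vnr :
  graded_vnr mul G -> right_finite_idem_generated op z mul G.
Proof.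
move=> vnr e ee _ n xs d hxs.
apply: (right_gen_hom_idem_seq (l := map xs (enum 'I_n)) vnr ee).
  move=> y; split=> [[i ->]|/mapP [i _ ->]]; last by exists i.
  by apply: map_f; rewrite mem_enum.
move=> _ /mapP [i _ ->]; have [_ [Gi [t [st ste]]]] := hxs i.
by exists (d i), t; split=> //; apply: lri_inv_quasi.
Qed.

Hypothesis eps_right : forall s x, G s x -> exists a, x = mul x a.

Lemma vnr_of_right_principal :
  right_principal_idem_generated mul G -> graded_vnr mul G.
Proof.
move=> gen x [s Gx].
apply: (regular_of_right_gen_hom_idem ring_mul (X := fun v => v = x)) => //.
- exact: eps_right Gx.
- exact: gen (ex_intro _ s Gx).
Qed.

Lemma vnr_of_right_finite :
  right_finite_idem_generated op z mul G -> graded_vnr mul G.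
Proof.
move=> gen x [s Gx]; have [->|x0] := eqVneq x 0.
  by exists 0; rewrite !(nu_mul0r ring_mul).
have sz : s <> z by apply: graded_nonzero_degree Gx _; apply/eqP.
have [t st] := lriS s.
apply: (regular_of_right_gen_hom_idem ring_mul (X := fun v => exists i : 'I_1, v = x)).
- by move=> y; split=> [[]|->] //; exists ord0.
- exact: eps_right Gx.
apply: (gen _ (lri_inv_idem st) (quasi_inv_neq zabs (lri_inv_quasi st) sz) 1
          (fun=> x) (fun=> s)) => _.
by split; [apply/eqP | split=> //; exists t].
Qed.

Theorem graded_vnr_iff_right_principal :
  graded_vnr mul G <-> right_principal_idem_generated mul G.
Proof. by split; [apply: right_principal_of_vnr | apply: vnr_of_right_principal]. Qed.

Theorem graded_vnr_iff_right_finite :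
  graded_vnr mul G <-> right_finite_idem_generated op z mul G.
Proof. by split; [apply: right_finite_of_vnr | apply: vnr_of_right_finite]. Qed.

End Graded.

Lemma nearly_eps_strong_s_unital (S : eqType) (op : S -> S -> S) (z : S)
    (R : zmodType) (mul : R -> R -> R) (G : S -> R -> Prop) s x :
  nearly_eps_strong op z mul G -> G s x ->
  (exists a, x = mul a x) /\ (exists a, x = mul x a).
Proof.
case=> _ [lriS eps] Gx; have [t st] := lriS s.
have [a [a' [_ [_ [ax xa']]]]] := eps s t st x Gx.
by split; [exists a | exists a'].
Qed.

Lemma graded_inducing_op (S : eqType) (op : S -> S -> S) (z : S)
    (R : zmodType) (mul : R -> R -> R) (G : S -> R -> Prop) :
  graded_inducing op z mul G ->
  graded_inducing (fun s t => op t s) z (fun x y => mul y x) G.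
Proof.
case=> zabs [[mulA [mulDl mulDr]] [Gsub [Gz [Gnz [GM [GMz Gsum]]]]]].
split; first by move=> s; have [] := zabs s.
split.
  split=> [x y w|]; first by rewrite mulA.
  by split=> x y w; [apply: mulDr | apply: mulDl].
do 3!split=> //; split; first by move=> s t x y Gx Gy; apply: GM.
by split=> // s t x y Gx Gy; apply: GMz.
Qed.

Lemma graded_vnr_op (S : eqType) (R : zmodType) (mul : R -> R -> R)
    (G : S -> R -> Prop) :
  nu_ring mul -> graded_vnr mul G <-> graded_vnr (fun x y => mul y x) G.
Proof.
move=> ring_mul; split=> vnr x /vnr [r xrx]; exists r; first by rewrite nu_mulA.
by rewrite -nu_mulA.
Qed.

Lemma right_finite_idem_generated_op (S : eqType) (op : S -> S -> S) (z : S)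
    (R : zmodType) (mul : R -> R -> R) (G : S -> R -> Prop) :
  right_finite_idem_generated (fun s t => op t s) z (fun x y => mul y x) G <->
  (forall e, idem op e -> e <> z ->
   forall n (xs : 'I_n -> R) (d : 'I_n -> S),
     (forall i, xs i <> 0 /\ G (d i) (xs i) /\
                exists t, lri_inv op (d i) t /\ op t (d i) = e) ->
     left_gen_hom_idem mul G (fun v => exists i, v = xs i)).
Proof.
split=> gen e ee ez n xs d hxs; apply: (gen e ee ez n xs d) => i;
  have [x0 [Gx [t [/lri_inv_op st ste]]]] := hxs i; by split=> //; split=> //; exists t.
Qed.

Theorem proposition4p8 (S : eqType) (op : S -> S -> S) (z : S)
  (R : zmodType) (mul : R -> R -> R) (G : S -> R -> Prop) :
  graded_inducing op z mul G ->
  nearly_eps_strong op z mul G ->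
  (graded_vnr mul G <->
     ((forall x, homogeneous G x -> right_gen_hom_idem mul G (fun v => v = x)) /\
      (forall x, homogeneous G x -> left_gen_hom_idem mul G (fun v => v = x))))
  /\
  (graded_vnr mul G <->
     ((forall e, idem op e -> e <> z ->
        forall n (xs : 'I_n -> R) (d : 'I_n -> S),
          (forall i, xs i <> 0 /\ G (d i) (xs i) /\
                     exists t, lri_inv op (d i) t /\ op (d i) t = e) ->
          right_gen_hom_idem mul G (fun v => exists i, v = xs i)) /\
      (forall e, idem op e -> e <> z ->
        forall n (xs : 'I_n -> R) (d : 'I_n -> S),
          (forall i, xs i <> 0 /\ G (d i) (xs i) /\
                     exists t, lri_inv op (d i) t /\ op t (d i) = e) ->
          left_gen_hom_idem mul G (fun v => exists i, v = xs i)))).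
Proof.
move=> graded nes; have [cancS [lriS _]] := nes.
have eps_r s x (Gx : G s x) := (nearly_eps_strong_s_unital nes Gx).2.
have eps_l s x (Gx : G s x) := (nearly_eps_strong_s_unital nes Gx).1.
have graded_op := graded_inducing_op graded.
have vnr_op : graded_vnr mul G <-> graded_vnr (fun x y => mul y x) G.
  by apply: graded_vnr_op; case: graded => _ [].
have iff_and (P A B : Prop) : (P <-> A) -> (P <-> B) -> (P <-> A /\ B) by tauto.
have cancS_op := cancellative_op cancS; have lriS_op := LRI_op lriS.
split; apply: iff_and.
- exact: graded_vnr_iff_right_principal graded cancS lriS eps_r.
- exact: iff_trans vnr_op (graded_vnr_iff_right_principal graded_op cancS_op lriS_op eps_l).
- exact: graded_vnr_iff_right_finite graded cancS lriS eps_r.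
- apply: iff_trans (right_finite_idem_generated_op op z mul G).
  exact: iff_trans vnr_op (graded_vnr_iff_right_finite graded_op cancS_op lriS_op eps_l).
Qed.
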